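(* Let $f=0$ be a structurally nonsingular DAE in $x:\mathbb{R}\to\mathbb{R}^n$, let $(p,q)$ be an optimal solution to $(\mathrm{D}_f)$, let $J=J_f^{p,q}$ be the associated system Jacobian, and let $(U,V)$ be a pair of nonsingular constant matrices $U,V\in\mathbb{R}^{n\times n}$ with $\operatorname{trank}(UJV)<n$ such that $U$ is upper-triangular along $p$ and $V$ is upper-triangular along $q$. Define the DAE $f'=0$ in the new variable $y:\mathbb{R}\to\mathbb{R}^n$ by $f'(y,\dot y,\dots,t):=U(D_t)\,f\big(V(D_t)y,\,V(D_t)\dot y,\,\dots,\,V(D_t)y^{(k)},\,t\big)$, where $U(D_t)=\operatorname{diag}\{D_t^{-p_i}\}\,U\,\operatorname{diag}\{D_t^{p_i}\}$ and $V(D_t)=\operatorname{diag}\{D_t^{-q_i}\}\,V\,\operatorname{diag}\{D_t^{q_i}\}$. Then $\hat\delta_{f'}<\hat\delta_f$.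
   Context: A DAE is $f(x,\dot x,\dots,x^{(k)},t)=0$ with $f:\mathbb{R}^{n(k+1)+1}\to\mathbb{R}^n$ smooth. Its $\sigma$-function is $\sigma_f(i,j)=\max\{l\in\mathbb{Z}_{\ge0}:\partial f_i/\partial x_j^{(l)}\not\equiv0\}$ (with $\max\emptyset=-\infty$). $(\mathrm{D}_f)$ is the problem: minimize $\sum_j q_j-\sum_i p_i$ subject to $q_j-p_i\ge\sigma_f(i,j)$, $p_i,q_j\in\mathbb{Z}_{\ge0}$ for all $i,j\in[n]$; $\hat\delta_f$ is its optimal value ($-\infty$ if infeasible/unbounded), and $f=0$ is structurally nonsingular if $\hat\delta_f\neq-\infty$. For an optimal $(p,q)$, the system Jacobian is the functional matrix $J_f^{p,q}=\big(\partial f_i/\partial x_j^{(q_j-p_i)}\big)_{ij}$ (entries with $q_j-p_i$ not a valid derivative order are zero). The term-rank $\operatorname{trank}M$ is the maximum number of entries not identically zero with no two in a common row or column. A matrix $U$ is upper-triangular along an integer sequence $p$ if $U_{ij}=0$ whenever $p_i>p_j$. $D_t=\mathrm{d}/\mathrm{d}t$; by the triangularity assumptions all entries of $U(D_t),V(D_t)$ are polynomials in $D_t$, explicitly $(U(D_t)f)_i=\sum_k U_{ik}f_k^{(p_k-p_i)}$ and $(V(D_t)y^{(l)})_m=\sum_j V_{mj}y_j^{(q_j-q_m+l)}$. *)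

From HB Require Import structures.
From mathcomp Require Import all_boot all_order all_algebra.
From mathcomp Require Import all_classical all_reals all_analysis.
Set Implicit Arguments. Unset Strict Implicit. Unset Printing Implicit Defensive.
Import Order.TTheory GRing.Theory Num.Theory.
Import numFieldNormedType.Exports.
Local Open Scope ring_scope.
Local Open Scope classical_set_scope.

Fixpoint iterD {R : realType} {V W : normedModType R} (vs : seq V) (g : V -> W)
  : V -> W :=
  match vs with
  | [::] => g
  | v :: vs' => fun x => derive (iterD vs' g) x v
  end.

Definition smooth {R : realType} {V W : normedModType R} (g : V -> W) : Prop :=
  forall (vs : seq V) (x : V), differentiable (iterD vs g) x.

(* X l j stands for the variable x_j^{(l)} *)
Definition jet (R : realType) (n : nat) := nat -> 'I_n -> R.

(* the point (x, x', ..., x^{(k)}, t) of R^{n(k+1)+1} *)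
Definition jetpt {R : realType} {n : nat} (k : nat) (X : jet R n) (t : R)
  : 'rV[R]_(k.+1 * n + 1) :=
  row_mx (mxvec (\matrix_(l < k.+1, j < n) X (nat_of_ord l) j)) (\row_(_ < 1) t).

Definition daelift {R : realType} {n k : nat} (f : 'rV[R]_(k.+1 * n + 1) -> 'rV[R]_n)
  (X : jet R n) (t : R) (i : 'I_n) : R := f (jetpt k X t) ord0 i.

Definition jset {R : realType} {n : nat} (X : jet R n) (l : nat) (j : 'I_n) (s : R)
  : jet R n := fun l' j' => if (l' == l) && (j' == j) then s else X l' j'.

Definition pdx {R : realType} {n : nat} (g : jet R n -> R -> R) (l : nat) (j : 'I_n)
  (X : jet R n) (t : R) : R :=
  derive1 (fun s => g (jset X l j s) t) (X l j).

Definition pdt {R : realType} {n : nat} (g : jet R n -> R -> R) (X : jet R n) (t : R) : R :=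
  derive1 (fun s => g X s) t.

(* total time derivative D_t of a function depending on jets of order <= K *)
Definition Dt {R : realType} {n : nat} (K : nat) (g : jet R n -> R -> R)
  (X : jet R n) (t : R) : R :=
  \sum_(l < K.+1) \sum_(j < n) pdx g l j X t * X l.+1 j + pdt g X t.

Fixpoint Dtn {R : realType} {n : nat} (K m : nat) (g : jet R n -> R -> R)
  : jet R n -> R -> R :=
  match m with
  | 0 => g
  | m'.+1 => Dt (K + m') (Dtn K m' g)
  end.

(* sigma(i,j) = max {l | d g_i / d x_j^{(l)} not identically zero}, max {} = -oo *)
Definition sigma {R : realType} {n : nat} (g : jet R n -> R -> 'I_n -> R)
  (i j : 'I_n) : \bar R :=
  ereal_sup [set (l%:R)%:E | l in
     [set l : nat | exists (X : jet R n) (t : R), pdx (fun X t => g X t i) l j X t != 0]].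

Definition feasible {R : realType} {n : nat} (sg : 'I_n -> 'I_n -> \bar R)
  (p q : 'I_n -> nat) : Prop :=
  forall i j : 'I_n, (sg i j <= ((q j)%:R - (p i)%:R)%:E)%E.

Definition objective {R : realType} {n : nat} (p q : 'I_n -> nat) : R :=
  \sum_(j < n) (q j)%:R - \sum_(i < n) (p i)%:R.

(* optimal value of (D_g); -oo if infeasible or unbounded *)
Definition dhat {R : realType} {n : nat} (sg : 'I_n -> 'I_n -> \bar R) : \bar R :=
  if `[< exists p q, feasible sg p q >] then
    ereal_inf [set x | exists p q, feasible sg p q /\ x = (@objective R n p q)%:E]
  else -oo%E.

Definition optimal {R : realType} {n : nat} (sg : 'I_n -> 'I_n -> \bar R)
  (p q : 'I_n -> nat) : Prop :=
  feasible sg p q /\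
  forall p' q', feasible sg p' q' -> @objective R n p q <= @objective R n p' q'.

Definition sysJac {R : realType} {n k : nat} (f : 'rV[R]_(k.+1 * n + 1) -> 'rV[R]_n)
  (p q : 'I_n -> nat) (i j : 'I_n) : jet R n -> R -> R :=
  fun X t => if (p i <= q j)%N then pdx (fun X t => daelift f X t i) (q j - p i) j X t
             else 0.

Definition mulF {R : realType} {n : nat} (U : 'M[R]_n) (J : 'I_n -> 'I_n -> jet R n -> R -> R)
  (V : 'M[R]_n) (i j : 'I_n) : jet R n -> R -> R :=
  fun X t => \sum_(a < n) \sum_(b < n) U i a * J a b X t * V b j.

Definition partial_matching {n : nat} (S : {set 'I_n * 'I_n}) : bool :=
  [forall x in S, forall y in S, (x != y) ==> ((x.1 != y.1) && (x.2 != y.2))].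

Definition trank {R : realType} {n : nat} (M : 'I_n -> 'I_n -> jet R n -> R -> R) : nat :=
  \max_(S : {set 'I_n * 'I_n} | partial_matching S &&
        [forall x in S, `[< exists (X : jet R n) (t : R), M x.1 x.2 X t != 0 >]]) #|S|.

Definition upper_along {R : realType} {n : nat} (p : 'I_n -> nat) (U : 'M[R]_n) : Prop :=
  forall i j : 'I_n, (p j < p i)%N -> U i j = 0.

(* (V(D_t) y^{(l)})_m = sum_j V_mj y_j^{(q_j - q_m + l)} *)
Definition substV {R : realType} {n : nat} (q : 'I_n -> nat) (V : 'M[R]_n) (Y : jet R n)
  : jet R n :=
  fun l m => \sum_(j < n) V m j * Y (q j - q m + l)%N j.

(* f'(y, y', ..., t)_i = sum_a U_ia D_t^{p_a - p_i} [ f_a(V(D_t)y, V(D_t)y', ..., t) ];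
   the composed function has order <= k + max_j q_j *)
Definition fprime {R : realType} {n k : nat} (f : 'rV[R]_(k.+1 * n + 1) -> 'rV[R]_n)
  (p q : 'I_n -> nat) (U V : 'M[R]_n) : jet R n -> R -> 'I_n -> R :=
  fun Y t i => \sum_(a < n) U i a *
     Dtn (k + \max_(j < n) q j) (p a - p i) (fun Y t => daelift f (substV q V Y) t a) Y t.

(* Row i of f' involves y_j^(l) only for l <= q_j - p_i, and its partial
   derivative in the top variable y_j^(q_j - p_i) is the entry (U J V)_ij
   evaluated at V(D_t) y: each total derivative D_t raises the top order by
   exactly one, and the chain rule through y |-> V(D_t) y contributes the
   factor V.  Call (i, j) tight when that derivative is not identically zero.
   As trank (U J V) < n, the tight relation has no perfect matching, so by
   Hall's theorem some set A of rows has fewer tight columns N(A) than |A|.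
   Raising p on A and q on N(A) by one keeps the dual problem of f' feasible
   and lowers the objective by |A| - |N(A)| > 0, below the optimum of f. *)

From HB Require Import structures.
From mathcomp Require Import all_boot zify.
Set Implicit Arguments. Unset Strict Implicit. Unset Printing Implicit Defensive.

Section HallMarriage.
Variable I : finType.
Implicit Types (T : rel I) (A B C E : {set I}).

Definition nbr T A : {set I} := [set j | [exists i in A, T i j]].

Definition avoiding T E : rel I := fun i j => T i j && (j \notin E).

Definition hall_condition T A := forall B, B \subset A -> #|B| <= #|nbr T B|.

Definition matchable T A :=
  exists2 g : I -> I, {in A &, injective g} & {in A, forall i, T i (g i)}.

Lemma nbrP T A j : reflect (exists2 i, i \in A & T i j) (j \in nbr T A).
Proof. by rewrite inE; apply: (iffP exists_inP) => -[i]; exists i. Qed.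

Lemma mem_nbr T A i j : i \in A -> T i j -> j \in nbr T A.
Proof. by move=> iA Tij; apply/nbrP; exists i. Qed.

Lemma nbrU T A B : nbr T (A :|: B) = nbr T A :|: nbr T B.
Proof.
apply/setP => j; rewrite in_setU; apply/nbrP/orP => [[i]|].
  by rewrite inE => /orP[] iX Tij; [left|right]; apply: mem_nbr Tij.
by case=> /nbrP[i iX Tij]; exists i; rewrite // inE iX ?orbT.
Qed.

Lemma nbr_avoiding T E A : nbr (avoiding T E) A = nbr T A :\: E.
Proof.
apply/setP => j; rewrite in_setD andbC; apply/nbrP/andP => [[i iA /andP[Tij jE]]|].
  by split; first exact: mem_nbr Tij.
by case=> /nbrP[i iA Tij] jE; exists i; rewrite // /avoiding Tij.
Qed.

Lemma matchable_glue T A B E (g : I -> I) :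
    {in B &, injective g} -> {in B, forall i, T i (g i) && (g i \in E)} ->
  matchable (avoiding T E) (A :\: B) -> matchable T A.
Proof.
move=> inj_g Tg [h inj_h Th].
have hE z : z \in A -> z \notin B -> T z (h z) && (h z \notin E).
  by move=> zA zB; apply: Th; rewrite inE zB.
exists (fun i => if i \in B then g i else h i) => [x y xA yA | i iA] /=.
  case: ifPn => xB; case: ifPn => yB.
  - exact: inj_g.
  - by move=> gh; case/andP: (hE y yA yB) => _; rewrite -gh (andP (Tg x xB)).2.
  - by move=> hg; case/andP: (hE x xA xB) => _; rewrite hg (andP (Tg y yB)).2.
  - by apply: inj_h; rewrite inE ?xB ?yB.
by case: ifPn => iB; [case/andP: (Tg i iB) | case/andP: (hE i iA iB)].
Qed.

Lemma hall_condition_critical T A B :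
    hall_condition T A -> B \subset A -> #|nbr T B| <= #|B| ->
  hall_condition (avoiding T (nbr T B)) (A :\: B).
Proof.
move=> hallA BA nbrB C; rewrite subsetD -setI_eq0 => /andP[CA /eqP CB0].
have := hallA (C :|: B); rewrite subUset CA BA => /(_ isT).
rewrite nbrU !cardsU CB0 cards0 subn0 nbr_avoiding cardsD.
have := subset_leq_card (subsetIl (nbr T C) (nbr T B)).
lia.
Qed.

Lemma hall_condition_surplus T A a b :
    (forall C, C != set0 -> C \proper A -> #|C| < #|nbr T C|) -> a \in A ->
  hall_condition (avoiding T [set b]) (A :\ a).
Proof.
move=> surplus aA C CAa; have [->|C0] := eqVneq C set0; first by rewrite cards0.
have := surplus C C0 (sub_proper_trans CAa (properD1 aA)).
by rewrite nbr_avoiding (cardsD1 b (nbr T C)); case: (b \in _) => /=; lia.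
Qed.

Lemma hall_marriage T A : hall_condition T A -> matchable T A.
Proof.
elim: {A}_.+1 {-2}A (ltnSn #|A|) T => // m IH A ltAm T hallA.
have [->|[a aA]] := set_0Vmem A; first by exists id => // i; rewrite inE.
case: (boolP [exists B, [&& B != set0, B \proper A & #|nbr T B| <= #|B|]]).
  case/existsP=> B /and3P[B0 BA nbrB].
  have BsubA := proper_sub BA.
  have [g inj_g Tg] : matchable T B.
    apply: IH => [|C CB]; first by have := proper_card BA; lia.
    exact/hallA/(subset_trans CB).
  apply: (matchable_glue (E := nbr T B) inj_g) => [i iB|].
    by rewrite Tg // (mem_nbr iB (Tg i iB)).
  apply: IH; last exact: hall_condition_critical.
  rewrite cardsD (setIidPr BsubA); have := card_gt0 B; rewrite B0.
  have := subset_leq_card BsubA; lia.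
move/existsPn=> no_critical.
have surplus C : C != set0 -> C \proper A -> #|C| < #|nbr T C|.
  by move=> C0 CA; have := no_critical C; rewrite C0 CA ltnNge => ->.
have /card_gt0P[b] : 0 < #|nbr T [set a]|.
  by apply: leq_trans (hallA _ _); rewrite ?cards1 ?sub1set.
case/nbrP=> _ /set1P-> Tab.
apply: (@matchable_glue T A [set a] [set b] (fun=> b)).
- by move=> x y /set1P-> /set1P->.
- by move=> i /set1P->; rewrite Tab set11.
apply: IH; last exact: hall_condition_surplus.
by move: ltAm; rewrite (cardsD1 a A) aA.
Qed.

Lemma hall_deficiency T :
  (exists2 g : I -> I, injective g & forall i, T i (g i)) \/
  exists A, #|nbr T A| < #|A|.
Proof.
case: (boolP [forall A : {set I}, #|A| <= #|nbr T A|]) => [/forallP hall|].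
  have [g inj_g Tg] := @hall_marriage T setT (fun B _ => hall B).
  by left; exists g => [x y|i]; [apply: inj_g | apply: Tg]; rewrite inE.
by case/forallPn=> A; rewrite -ltnNge; right; exists A.
Qed.

End HallMarriage.

From mathcomp Require Import all_order all_algebra.
From mathcomp Require Import all_classical all_reals all_analysis.
From mathcomp Require Import ring lra.
Import Order.TTheory GRing.Theory Num.Theory.
Import numFieldNormedType.Exports.
Local Open Scope ring_scope.

Section LineDerivative.
Variables (R : realType) (V W : normedModType R).
Implicit Types (F : V -> W) (P v : V) (s : R).

Lemma line_quotientE F P v s :
  (fun h : R =>
     h^-1 *: (((fun s => F (P + s *: v)) \o shift s) (h *: 1) - F (P + s *: v))) =
  (fun h : R => h^-1 *: ((F \o shift (P + s *: v)) (h *: v) - F (P + s *: v))).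
Proof.
by apply/funext => h /=; rewrite [h%:A]mulr1 scalerDl addrCA.
Qed.

Lemma derivable_line F P v s :
  derivable F (P + s *: v) v -> derivable (fun s => F (P + s *: v)) s 1.
Proof. by rewrite /derivable line_quotientE. Qed.

Lemma derive1_line F P v s :
  derive1 (fun s => F (P + s *: v)) s = 'D_v F (P + s *: v).
Proof. by rewrite derive1E /derive line_quotientE. Qed.

End LineDerivative.

Section Affine.
Variables (R : realType) (a b x : R).

Lemma is_derive_affine : is_derive x 1 (fun s : R => b + s * a) a.
Proof.
have -> : (fun s : R => b + s * a) = cst b + a \*: id.
  by apply/funext => s; rewrite /= mulrC.
by apply: is_derive_eq; rewrite scaler1 add0r.
Qed.

Lemma derivable_affine : derivable (fun s : R => b + s * a) x 1.
Proof. by case: is_derive_affine. Qed.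

Lemma derive1_affine : derive1 (fun s : R => b + s * a) x = a.
Proof. by rewrite derive1E; case: is_derive_affine. Qed.

End Affine.

Lemma sum_ord_succ_eq (V : nmodType) (F : nat -> V) K m :
  \sum_(l < K.+1 | l.+1 == m) F l = if (0 < m <= K.+1)%N then F m.-1 else 0.
Proof.
case: m => [|m] /=; first by rewrite big_pred0.
by rewrite (eq_bigl (fun l : 'I_K.+1 => l == m :> nat)) ?big_ord1_eq.
Qed.

Section JetDependence.
Variables (R : realType) (n : nat).
Implicit Types (X Y : jet R n) (g : jet R n -> R -> R) (D : nat -> 'I_n -> bool).

Definition depends_only_on g D :=
  forall X X' t, (forall l j, D l j -> X l j = X' l j) -> g X t = g X' t.

(* The variables x_j^(l) with l <= q_j - c; a row i feasible for (p, q)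
   involves only [lower_orders q (p i)]. *)
Definition lower_orders (q : 'I_n -> nat) (c l : nat) (j : 'I_n) := (l + c <= q j)%N.

Definition jdelta (l : nat) (j : 'I_n) : jet R n :=
  fun l' j' => ((l' == l) && (j' == j))%:R.

Lemma jset_id X l j : jset X l j (X l j) = X.
Proof.
apply/funext => l'; apply/funext => j'; rewrite /jset.
by case: eqP => // ->; case: eqP => // ->.
Qed.

Lemma jset_jset X l j s s' : jset (jset X l j s) l j s' = jset X l j s'.
Proof.
apply/funext => l'; apply/funext => j'; rewrite /jset.
by case: eqP => //; case: eqP.
Qed.

Lemma jset_out D X l j s l' j' :
  ~~ D l j -> D l' j' -> jset X l j s l' j' = X l' j'.
Proof.
move=> Dlj Dl'j'; rewrite /jset; case: ifP => // /andP[/eqP el /eqP ej].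
by move: Dlj; rewrite -el -ej Dl'j'.
Qed.

Lemma jset_affine X l j s :
  jset X l j s = (fun l' j' => jset X l j 0 l' j' + s * jdelta l j l' j').
Proof.
apply/funext => l'; apply/funext => j'; rewrite /jset /jdelta.
by case: ifP => _; rewrite ?mulr1 ?mulr0 ?addr0 ?add0r.
Qed.

Lemma sum_jdelta (F : 'I_n -> R) l j l' :
  \sum_(j' < n) F j' * jdelta l j l' j' = (l' == l)%:R * F j.
Proof.
rewrite (bigD1 j) //= big1 => [|j' /negPf nj]; last by rewrite /jdelta nj andbF mulr0.
by rewrite /jdelta eqxx andbT addr0 mulrC.
Qed.

Lemma pdx_jset g l j X t s :
  pdx g l j (jset X l j s) t = derive1 (fun s' => g (jset X l j s') t) s.
Proof.
rewrite /pdx; have -> : jset X l j s l j = s by rewrite /jset !eqxx.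
by congr derive1; apply/funext => s'; rewrite jset_jset.
Qed.

Lemma pdx_eq0_out g D l j X t : depends_only_on g D -> ~~ D l j -> pdx g l j X t = 0.
Proof.
move=> dg Dlj; rewrite /pdx.
have -> : (fun s => g (jset X l j s) t) = cst (g X t).
  by apply/funext => s; apply: dg => l' j'; apply: jset_out.
exact: derive1_cst.
Qed.

Lemma depends_pdx g D l j : depends_only_on g D -> depends_only_on (pdx g l j) D.
Proof.
move=> dg X X' t XX'.
have [Dlj|Dlj] := boolP (D l j); last by rewrite !(pdx_eq0_out _ _ dg).
rewrite /pdx XX' //; congr derive1; apply/funext => s; apply: dg => l' j' Dl'j'.
by rewrite /jset; case: ifP => // _; apply: XX'.
Qed.

Lemma depends_pdt g D : depends_only_on g D -> depends_only_on (pdt g) D.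
Proof.
by move=> dg X X' t XX'; rewrite /pdt; congr derive1; apply/funext => s; apply: dg.
Qed.

Lemma pdx_lincomb m (c : 'I_m -> R) (h : 'I_m -> jet R n -> R -> R) l j X t :
    (forall a, derivable (fun s => h a (jset X l j s) t) (X l j) 1) ->
  pdx (fun X t => \sum_a c a * h a X t) l j X t = \sum_a c a * pdx (h a) l j X t.
Proof.
move=> dh; rewrite /pdx.
have -> : (fun s => \sum_a c a * h a (jset X l j s) t) =
    \sum_a c a \*: (fun s => h a (jset X l j s) t).
  by apply/funext => s; rewrite fct_sumE.
rewrite derive1E derive_sum => [|a]; last exact: derivableZ.
by apply: eq_bigr => a _; rewrite deriveZ // -derive1E.
Qed.

Lemma jset_invariant_of_pdx_eq0 g l j :
    (forall X t x, derivable (fun s => g (jset X l j s) t) x 1) ->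
    (forall X t, pdx g l j X t = 0) ->
  forall X t s, g (jset X l j s) t = g X t.
Proof.
move=> dg pdx0 X t s; rewrite -{2}(jset_id X l j).
apply: (is_derive_0_is_cst (f := fun s => g (jset X l j s) t)) => x.
by rewrite -(pdx0 (jset X l j x) t) pdx_jset derive1E; apply: derivableP.
Qed.

Lemma eq_of_jset_invariant g (S : seq (nat * 'I_n)) X X' t :
    (forall c, c \in S -> forall Y s, g (jset Y c.1 c.2 s) t = g Y t) ->
    (forall l j, (l, j) \notin S -> X l j = X' l j) ->
  g X t = g X' t.
Proof.
elim: S X => [|c S IH] X inv XX'.
  by congr g; apply/funext => l; apply/funext => j; apply: XX'.
rewrite -(inv c (mem_head _ _) X (X' c.1 c.2)); apply: IH => [c' c'S|l j lj].
  by apply: inv; rewrite in_cons c'S orbT.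
rewrite /jset; case: ifP => [/andP[/eqP-> /eqP->] //|ne].
apply: XX'; rewrite in_cons negb_or lj andbT.
by apply: contraFN ne => /eqP<-; rewrite !eqxx.
Qed.

Section Orders.
Variable q : 'I_n -> nat.

Lemma depends_Dt K g c :
  depends_only_on g (lower_orders q c.+1) -> depends_only_on (Dt K g) (lower_orders q c).
Proof.
move=> dg X X' t XX'.
have XX'1 l j : lower_orders q c.+1 l j -> X l j = X' l j.
  by rewrite /lower_orders => Dlj; apply: XX'; rewrite /lower_orders; lia.
rewrite /Dt (depends_pdt dg _ XX'1); congr (_ + _).
apply: eq_bigr => l _; apply: eq_bigr => j _.
have [Dlj|Dlj] := boolP (lower_orders q c.+1 l j).
  by rewrite (depends_pdx _ _ dg _ XX'1) XX' //; move: Dlj; rewrite /lower_orders; lia.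
by rewrite !(pdx_eq0_out _ _ dg Dlj) !mul0r.
Qed.

Lemma depends_Dtn K m c g : depends_only_on g (lower_orders q c) -> (m <= c)%N ->
  depends_only_on (Dtn K m g) (lower_orders q (c - m)).
Proof.
move=> dg; elim: m => [|m IH] mc; first by rewrite subn0.
by apply: depends_Dt; rewrite subnSK //; apply: IH; apply: ltnW.
Qed.

(* The top coordinate x_j^{(q_j - c)} enters [Dt K g] only through the
   products [pdx g l j * x_j^{(l+1)}], hence affinely. *)
Lemma Dt_jset_top K g c j X t : depends_only_on g (lower_orders q c.+1) ->
  (fun s => Dt K g (jset X (q j - c) j s) t) =
  (fun s => Dt K g (jset X (q j - c) j 0) t +
            s * \sum_(l < K.+1 | l.+1 == (q j - c)%N) pdx g l j X t).
Proof.
move=> dg; apply/funext => s; set l0 := (q j - c)%N.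
have agree s' l j' : lower_orders q c.+1 l j' -> jset X l0 j s' l j' = X l j'.
  by apply: jset_out; rewrite /lower_orders; lia.
rewrite /Dt !(depends_pdt dg _ (agree _)) addrAC; congr (_ + _).
rewrite mulr_sumr [X in _ + X]big_mkcond -big_split; apply: eq_bigr => l _ /=.
under eq_bigr => j' _ do rewrite (depends_pdx _ _ dg _ (agree s)) [jset _ _ _ s]jset_affine.
under [in RHS]eq_bigr => j' _ do rewrite (depends_pdx _ _ dg _ (agree 0)).
have -> : (if l.+1 == l0 then s * pdx g l j X t else 0) =
    s * ((l.+1 == l0)%:R * pdx g l j X t) by case: eqP; rewrite ?mul1r ?mul0r ?mulr0.
rewrite -(sum_jdelta (fun j' => pdx g l j' X t)) mulr_sumr -big_split.
by apply: eq_bigr => j' _ /=; ring.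
Qed.

Lemma pdx_Dt_top K g c j X t :
    depends_only_on g (lower_orders q c.+1) -> (q j <= K.+1)%N ->
  pdx (Dt K g) (q j - c) j X t = if (c < q j)%N then pdx g (q j - c.+1) j X t else 0.
Proof.
move=> dg qK; rewrite [LHS]/pdx (Dt_jset_top _ _ _ _ dg).
rewrite derive1_affine (sum_ord_succ_eq (fun l => pdx g l j X t)).
by rewrite subn_gt0 (leq_trans (leq_subr c (q j)) qK) andbT subnS.
Qed.

Lemma derivable_Dt_top K g c j X t x : depends_only_on g (lower_orders q c.+1) ->
  derivable (fun s => Dt K g (jset X (q j - c) j s) t) x 1.
Proof. by move=> dg; rewrite (Dt_jset_top _ _ _ _ dg); apply: derivable_affine. Qed.

Lemma pdx_Dtn_top K m c g j X t :
    depends_only_on g (lower_orders q c) -> (m <= c)%N -> (q j <= K)%N ->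
  pdx (Dtn K m g) (q j - (c - m)) j X t =
  if (c <= q j)%N then pdx g (q j - c) j X t else 0.
Proof.
move=> dg; elim: m => [|m IH] mc qK.
  rewrite subn0 /=; case: leqP => // qc.
  by apply: (pdx_eq0_out X t dg); rewrite /lower_orders; lia.
rewrite /= pdx_Dt_top; last 2 first.
- by rewrite subnSK //; apply: depends_Dtn => //; apply: ltnW.
- lia.
rewrite subnSK // IH ?(ltnW mc) //.
by case: ltnP => cq //; rewrite ifF //; lia.
Qed.

Definition jet_linear (L : jet R n -> jet R n) :=
  forall X W s, L (fun l j => X l j + s * W l j) = (fun l j => L X l j + s * L W l j).

Lemma jet_linear_substV (V : 'M[R]_n) : jet_linear (substV q V).
Proof.
move=> X W s; apply/funext => l; apply/funext => m; rewrite /substV mulr_sumr -big_split.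
by apply: eq_bigr => j _ /=; ring.
Qed.

Lemma depends_substV (V : 'M[R]_n) G c :
    upper_along q V -> depends_only_on G (lower_orders q c) ->
  depends_only_on (fun Y t => G (substV q V Y) t) (lower_orders q c).
Proof.
move=> uV dG Y Y' t YY'; apply: dG => m b Dmb; rewrite /substV; apply: eq_bigr => j _.
have [qjb|qbj] := ltnP (q j) (q b); first by rewrite uV // !mul0r.
by rewrite YY' //; move: Dmb; rewrite /lower_orders; lia.
Qed.

Lemma substV_jdelta (V : 'M[R]_n) c j : upper_along q V -> (c <= q j)%N ->
  substV q V (jdelta (q j - c) j) =
  (fun m b => \sum_b' (V b' j * (c <= q b')%:R) * jdelta (q b' - c) b' m b).
Proof.
move=> uV cj; apply/funext => m; apply/funext => b; rewrite /substV.
rewrite (bigD1 j) //= big1 => [|j' /negPf nj]; last by rewrite /jdelta nj andbF mulr0.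
rewrite (bigD1 b) //= big1 => [|b' /negPf nb]; last first.
  by rewrite /jdelta [b == b']eq_sym nb andbF mulr0.
rewrite /jdelta !eqxx !andbT !addr0.
have [qjb|qbj] := ltnP (q j) (q b); first by rewrite uV // !mul0r.
rewrite -mulrA -natrM; congr (_ * _%:R).
case: leqP => cb; rewrite ?mul1n ?mul0n; do 2?case: eqP => ? /=; lia.
Qed.

End Orders.
End JetDependence.

Section ChainRule.
Variables (R : realType) (n k : nat) (f : 'rV[R]_(k.+1 * n + 1) -> 'rV[R]_n).
Hypothesis df : forall x, differentiable f x.
Implicit Types (X Y W : jet R n) (L : jet R n -> jet R n).

Definition jetvec W := jetpt k W 0.

Definition coordf (a : 'I_n) x := f x ord0 a.

Lemma jetpt_affine X W s t :
  jetpt k (fun l j => X l j + s * W l j) t = jetpt k X t + s *: jetvec W.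
Proof.
rewrite /jetvec /jetpt scale_row_mx add_row_mx; congr row_mx.
  by rewrite -linearZ -linearD; congr mxvec; apply/matrixP => i j; rewrite !mxE.
by apply/rowP => i; rewrite !mxE mulr0 addr0.
Qed.

Lemma jetpt_agree X X' t : (forall l j, (l <= k)%N -> X l j = X' l j) ->
  jetpt k X t = jetpt k X' t.
Proof.
move=> XX'; rewrite /jetpt; congr row_mx; congr mxvec; apply/matrixP => i j.
by rewrite !mxE XX' // -ltnS.
Qed.

Lemma jetvec0 : jetvec (fun _ _ => 0) = 0.
Proof.
rewrite /jetvec /jetpt -row_mx0 -(linear0 mxvec); congr row_mx.
  by congr mxvec; apply/matrixP => i j; rewrite !mxE.
by apply/rowP => i; rewrite !mxE.
Qed.

Lemma jetvec_sum (I : Type) (r : seq I) (c : I -> R) (Wf : I -> jet R n) :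
  jetvec (fun l j => \sum_(i <- r) c i * Wf i l j) = \sum_(i <- r) c i *: jetvec (Wf i).
Proof.
elim: r => [|i r IH].
  rewrite big_nil -jetvec0; congr jetpt.
  by apply/funext => l; apply/funext => j; rewrite big_nil.
rewrite big_cons -IH addrC -jetpt_affine /jetvec; congr jetpt.
by apply/funext => l; apply/funext => j; rewrite big_cons addrC.
Qed.

Lemma differentiable_coordf a x : differentiable (coordf a) x.
Proof.
have -> : coordf a = (fun N : 'rV[R]_n => N ord0 a) \o f by [].
by apply: differentiable_comp; [exact: df | exact: differentiable_coord].
Qed.

Section LinearSubstitution.
Variables (L : jet R n -> jet R n) (a : 'I_n).
Hypothesis linL : jet_linear L.

Lemma daelift_comp_line Y l j t :
  (fun s => daelift f (L (jset Y l j s)) t a) =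
  (fun s => coordf a (jetpt k (L (jset Y l j 0)) t + s *: jetvec (L (jdelta R l j)))).
Proof. by apply/funext => s; rewrite /daelift -jetpt_affine -linL -jset_affine. Qed.

Lemma derivable_daelift_comp Y l j t x :
  derivable (fun s => daelift f (L (jset Y l j s)) t a) x 1.
Proof.
rewrite daelift_comp_line; apply: derivable_line.
exact/diff_derivable/differentiable_coordf.
Qed.

Lemma pdx_daelift_comp Y l j t :
  pdx (fun Y t => daelift f (L Y) t a) l j Y t =
  'd (coordf a) (jetpt k (L Y) t) (jetvec (L (jdelta R l j))).
Proof.
rewrite /pdx daelift_comp_line derive1_line deriveE; last exact: differentiable_coordf.
by rewrite -jetpt_affine -linL -jset_affine jset_id.
Qed.

End LinearSubstitution.

Lemma jet_linear_id : jet_linear (@id (jet R n)).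
Proof. by []. Qed.

Lemma depends_daelift a D :
    (forall m b, ~~ D m b -> (m <= k)%N ->
       forall X t, pdx (fun X t => daelift f X t a) m b X t = 0) ->
  depends_only_on (fun X t => daelift f X t a) D.
Proof.
move=> pdx0 X X' t XX'.
pose X'' l j := if (l <= k)%N then X' l j else X l j.
have -> : daelift f X' t a = daelift f X'' t a.
  by rewrite /daelift (@jetpt_agree X' X'') // => l j lk; rewrite /X'' lk.
pose S := [seq c <- [seq (l, j) | l <- iota 0 k.+1, j <- enum 'I_n] | ~~ D c.1 c.2].
have memS l j : ((l, j) \in S) = ~~ D l j && (l <= k)%N.
  rewrite mem_filter; congr (_ && _); apply/allpairsP/idP => [[[l' j'] [+ _ [-> _]]]|lk].
    by rewrite mem_iota add0n ltnS.
  by exists (l, j); rewrite mem_iota add0n ltnS lk mem_enum.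
apply: (eq_of_jset_invariant (g := fun X t => daelift f X t a) (S := S)) => [[m b]|l j].
  rewrite memS => /andP[Dmb mk] Y s.
  apply: (jset_invariant_of_pdx_eq0 (g := fun X t => daelift f X t a)) => [Z t' x|Z t'].
    exact: (derivable_daelift_comp jet_linear_id).
  exact: pdx0.
rewrite memS /X''; case: leqP => // lk; rewrite andbT negbK; exact: XX'.
Qed.

Lemma pdx_daelift_substV (p q : 'I_n -> nat) V a j Y t :
    upper_along q V -> (p a <= q j)%N ->
  pdx (fun Y t => daelift f (substV q V Y) t a) (q j - p a) j Y t =
  \sum_b sysJac f p q a b (substV q V Y) t * V b j.
Proof.
move=> uV paj; rewrite (pdx_daelift_comp _ (jet_linear_substV q V)) substV_jdelta //.
rewrite jetvec_sum linear_sum; apply: eq_bigr => b _; rewrite linearZ /= /sysJac.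
rewrite -(pdx_daelift_comp _ jet_linear_id).
by case: leqP => _ /=; rewrite ?mulr1n ?mulr0n ?mulr1 ?mulr0 ?scale0r ?mul0r // mulrC.
Qed.

Lemma sum_sysJac_eq0 (p q : 'I_n -> nat) V a j X t :
  upper_along q V -> (q j < p a)%N -> \sum_b sysJac f p q a b X t * V b j = 0.
Proof.
move=> uV qpa; apply: big1 => b _.
have [qjb|qbj] := ltnP (q j) (q b); first by rewrite uV // mulr0.
by rewrite /sysJac ifF ?mul0r //; apply/negbTE; rewrite -ltnNge; lia.
Qed.

End ChainRule.

Lemma leq_trank_matching (R : realType) n (M : 'I_n -> 'I_n -> jet R n -> R -> R)
    (g : 'I_n -> 'I_n) :
  injective g -> (forall i, exists X t, M i (g i) X t != 0) -> (n <= trank M)%N.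
Proof.
move=> inj_g nz; pose S := [set (i, g i) | i : 'I_n].
have cardS : #|S| = n by rewrite card_imset ?cardsT ?card_ord // => x y [].
rewrite -{1}cardS; apply: leq_bigmax_cond; apply/andP; split.
  apply/forall_inP => _ /imsetP[i _ ->]; apply/forall_inP => _ /imsetP[i' _ ->].
  apply/implyP => ne /=; have nii : i != i' by apply: contra ne => /eqP->.
  by rewrite nii; apply: contra nii => /eqP/inj_g->.
by apply/forall_inP => _ /imsetP[i _ ->]; apply/asboolP; exact: nz.
Qed.

Section DualProblem.
Variables (R : realType) (n : nat).
Implicit Types (g : jet R n -> R -> 'I_n -> R) (p q : 'I_n -> nat)
  (sg : 'I_n -> 'I_n -> \bar R).

Lemma pdx_le_sigma g i l j X t :
  pdx (fun X t => g X t i) l j X t != 0 -> ((l%:R)%:E <= sigma g i j)%E.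
Proof. by move=> nz; apply: ereal_sup_ubound; exists l => //; exists X, t. Qed.

Lemma sigma_le g i j (x : \bar R) :
    (forall l X t, pdx (fun X t => g X t i) l j X t != 0 -> ((l%:R)%:E <= x)%E) ->
  (sigma g i j <= x)%E.
Proof. by move=> ub; apply: ge_ereal_sup => _ [l [X [t nz]] <-]; exact: ub nz. Qed.

Lemma feasible_pdx_eq0 g p q i l j X t :
  feasible (sigma g) p q -> ~~ lower_orders q (p i) l j ->
  pdx (fun X t => g X t i) l j X t = 0.
Proof.
move=> feas; apply: contraNeq => /pdx_le_sigma/le_trans/(_ (feas i j)).
by rewrite lee_fin lerBrDr -natrD ler_nat.
Qed.

Lemma dhat_le_objective sg p q : feasible sg p q -> (dhat sg <= (objective p q)%:E)%E.
Proof.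
by move=> fpq; rewrite /dhat asboolT; [apply: ereal_inf_lbound; exists p, q | exists p, q].
Qed.

Lemma optimal_dhat sg p q : optimal sg p q -> dhat sg = (objective p q)%:E.
Proof.
case=> fpq opt; apply/le_anti; rewrite dhat_le_objective //=.
rewrite /dhat asboolT; last by exists p, q.
by apply: le_ereal_inf_tmp => _ [p' [q' [fpq' ->]]]; rewrite lee_fin opt.
Qed.

Lemma objective_shift p q (A B : {set 'I_n}) :
  objective (fun i => p i + (i \in A))%N (fun j => q j + (j \in B))%N =
  objective p q + #|B|%:R - #|A|%:R :> R.
Proof.
have sum_card (C : {set 'I_n}) : \sum_(j < n) ((j \in C) : nat)%:R = #|C|%:R :> R.
  rewrite -natr_sum -sum1_card; congr _%:R.
  by rewrite [RHS]big_mkcond; apply: eq_bigr => j _; case: (j \in C).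
rewrite /objective; under eq_bigr do rewrite natrD.
under [X in _ - X]eq_bigr do rewrite natrD.
by rewrite !big_split /= !sum_card; lra.
Qed.

Definition tight g p q : rel 'I_n := fun i j =>
  (p i <= q j)%N && `[< exists X t, pdx (fun X t => g X t i) (q j - p i) j X t != 0 >].

(* Raising [p] on [A] and [q] on the columns tight with [A] keeps every
   constraint [q_j - p_i >= sigma(i,j)]: only pairs [(i, j)] with [i] in [A],
   [j] not tight with [A], lose one unit of slack, and those had slack. *)
Lemma feasible_shift g p q (A : {set 'I_n}) :
    (forall i, depends_only_on (fun X t => g X t i) (lower_orders q (p i))) ->
  feasible (sigma g) (fun i => p i + (i \in A))%N
                     (fun j => q j + (j \in nbr (tight g p q) A))%N.
Proof.
move=> dg i j; apply: sigma_le => l X t nz.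
rewrite lee_fin lerBrDr -natrD ler_nat.
have lij : (l + p i <= q j)%N.
  by apply: contraNT nz => out; rewrite (pdx_eq0_out _ _ (dg i) out).
case iA: (i \in A); case jN: (j \in nbr _ A) => /=; try lia.
suff : (l + p i != q j)%N by lia.
apply: contraFN jN => /eqP lpq; apply: (mem_nbr iA); rewrite /tight.
have -> : (p i <= q j)%N by lia.
have -> : (q j - p i = l)%N by lia.
by apply/asboolP; exists X, t.
Qed.

End DualProblem.

Section TransformedDAE.
Variables (R : realType) (n k : nat) (f : 'rV[R]_(k.+1 * n + 1) -> 'rV[R]_n).
Variables (p q : 'I_n -> nat) (U V : 'M[R]_n).
Hypothesis df : forall x, differentiable f x.
Hypothesis feas : feasible (sigma (daelift f)) p q.
Hypothesis uU : upper_along p U.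
Hypothesis uV : upper_along q V.

Local Notation K := (k + \max_(j < n) q j)%N.
Local Notation fV a := (fun Y t => daelift f (substV q V Y) t a).

Lemma depends_daelift_feasible a :
  depends_only_on (fun X t => daelift f X t a) (lower_orders q (p a)).
Proof. by apply: depends_daelift => // m b out _ X t; exact: feasible_pdx_eq0 feas out. Qed.

Lemma depends_fV a : depends_only_on (fV a) (lower_orders q (p a)).
Proof.
exact: (depends_substV (G := fun X t => daelift f X t a) uV
          (depends_daelift_feasible (a := a))).
Qed.

Lemma depends_fprime i :
  depends_only_on (fun Y t => fprime f p q U V Y t i) (lower_orders q (p i)).
Proof.
move=> X X' t XX'; apply: eq_bigr => a _.
have [pai|pia] := ltnP (p a) (p i); first by rewrite uU // !mul0r.
have := depends_Dtn K (depends_fV (a := a)) (leq_subr (p i) (p a)).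
by rewrite subKn // => /(_ X X' t XX') ->.
Qed.

Lemma derivable_fprime_term i j a Y t x :
  derivable (fun s => Dtn K (p a - p i) (fV a) (jset Y (q j - p i) j s) t) x 1.
Proof.
case E: (p a - p i)%N => [|d] /=.
  exact: (derivable_daelift_comp df (a := a) (jet_linear_substV q V)).
apply: derivable_Dt_top; have -> : (p i).+1 = (p a - d)%N by lia.
by apply: depends_Dtn (depends_fV (a := a)) _; lia.
Qed.

Lemma pdx_fprime_top i j Y t : (p i <= q j)%N ->
  pdx (fun Y t => fprime f p q U V Y t i) (q j - p i) j Y t =
  mulF U (sysJac f p q) V i j (substV q V Y) t.
Proof.
move=> pij; rewrite pdx_lincomb => [|a]; last exact: derivable_fprime_term.
rewrite /mulF; apply: eq_bigr => a _.
rewrite (eq_bigr (fun b => U i a * (sysJac f p q a b (substV q V Y) t * V b j)));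
  last by move=> b _; rewrite mulrA.
rewrite -mulr_sumr.
have [pai|pia] := ltnP (p a) (p i); first by rewrite uU // !mul0r.
congr (_ * _); rewrite -[X in (q j - X)%N](subKn pia).
rewrite pdx_Dtn_top ?leq_subr ?(leq_trans (leq_bigmax j) (leq_addl _ _)) //;
  last exact: depends_fV.
by case: leqP => paj; [rewrite pdx_daelift_substV | rewrite sum_sysJac_eq0].
Qed.

Lemma tight_fprime_mulF i j : tight (fprime f p q U V) p q i j ->
  exists X t, mulF U (sysJac f p q) V i j X t != 0.
Proof.
case/andP=> pij /asboolP[Y [t nz]].
by exists (substV q V Y), t; rewrite -pdx_fprime_top.
Qed.

End TransformedDAE.

Theorem theorem4 (R : realType) (n k : nat)
  (f : 'rV[R]_(k.+1 * n + 1) -> 'rV[R]_n) (p q : 'I_n -> nat) (U V : 'M[R]_n) :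
  smooth f ->
  dhat (sigma (daelift f)) != -oo%E ->
  optimal (sigma (daelift f)) p q ->
  U \in unitmx -> V \in unitmx ->
  upper_along p U -> upper_along q V ->
  (trank (mulF U (sysJac f p q) V) < n)%N ->
  (dhat (sigma (fprime f p q U V)) < dhat (sigma (daelift f)))%E.
Proof.
move=> smooth_f _ opt _ _ uU uV trank_lt.
have df x : differentiable f x := smooth_f [::] x.
have feas := opt.1.
have [[g inj_g tight_g] | [A deficient]] := hall_deficiency (tight (fprime f p q U V) p q).
  have := leq_trank_matching inj_g (fun i => tight_fprime_mulF df feas uU uV (tight_g i)).
  by rewrite leqNgt trank_lt.
rewrite (optimal_dhat opt).
apply: le_lt_trans (dhat_le_objective (feasible_shift A (depends_fprime df feas uU uV))) _.
by rewrite lte_fin objective_shift -addrA gtrDl subr_lt0 ltr_nat.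
Qed.
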